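(* For every $k\ge0$, $F_k$ equals the $(I_0,I_0)$ entry of the matrix $\mathbf T^k$, where $I_0=[0,a-1]$.
   Context: Let $S$ be a finite set of integers with $a:=\max S\ge 1$ and $b:=-\min S\ge 1$. Each $s\in S$ carries a weight $\omega_s$ in a field $K$ of characteristic $0$; set $\omega_s:=0$ for $s\in\mathbb Z\setminus S$, and for $s\in\mathbb Z$ put $\beta_s:=\delta_{s,0}-\omega_s$. For $k\ge0$, $A_k$ is the $(k+1)\times(k+1)$ matrix with rows and columns indexed by $0,\dots,k$ whose $(i,j)$ entry is $\omega_{j-i}$. Put $F_0:=1$ and $F_k:=\det(1-A_{k-1})$ for $k\ge1$. Notation: $[m,n]:=\{i\in\mathbb Z: m\le i\le n\}$, $X+c:=\{x+c:x\in X\}$; an $n$-subset is a subset of cardinality $n$. For a finite set $I\subseteq\mathbb Z$ and $s\in\mathbb Z$, $\epsilon_s(I):=(-1)^{\#\{i\in I:\ i<s\}}$. $\mathbf T$ is the square matrix with rows and columns indexed by the $a$-subsets of $[-b,a-1]$ and entries $\mathbf T[I,J]:=\epsilon_s(I)\beta_s$ if there is an integer $s$ with $I\cup\{a\}=(J+1)\cup\{s\}$ (such $s$ is then unique), and $\mathbf T[I,J]:=0$ otherwise. *)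

From HB Require Import structures.
From mathcomp Require Import all_boot all_order all_algebra.
From Stdlib Require Import ClassicalEpsilon.
Set Implicit Arguments. Unset Strict Implicit. Unset Printing Implicit Defensive.
Import Order.TTheory GRing.Theory Num.Theory.
Local Open Scope ring_scope.

Section Defs.
Variable K : fieldType.
Variable S : seq int.
Variable w : int -> K.

Definition omega (s : int) : K := if s \in S then w s else 0.

Definition beta (s : int) : K := (s == 0)%:R - omega s.

Definition Amx (k : nat) : 'M[K]_k.+1 :=
  \matrix_(i < k.+1, j < k.+1) omega (j%:Z - i%:Z).

Definition Fk (k : nat) : K :=
  if k is k'.+1 then \det (1%:M - Amx k') else 1.

Variables a b : nat.
(* Subsets of [-b, a-1] are encoded as subsets of 'I_(b+a),
   the ordinal i standing for the integer i - b. *)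
Definition toZ (i : 'I_(b + a)) : int := i%:Z - b%:Z.

Definition inZ (I : {set 'I_(b + a)}) (x : int) : bool :=
  [exists i in I, toZ i == x].

Definition epsI (s : int) (I : {set 'I_(b + a)}) : K :=
  (-1) ^+ #|[set i in I | toZ i < s]|.

Definition Tcond (I J : {set 'I_(b + a)}) (s : int) : Prop :=
  forall x : int, (inZ I x || (x == a%:Z)) = (inZ J (x - 1) || (x == s)).

Definition Tentry (I J : {set 'I_(b + a)}) : K :=
  match excluded_middle_informative (exists s : int, Tcond I J s) with
  | left H => let s := proj1_sig (constructive_indefinite_description _ H) in
              epsI s I * beta s
  | right _ => 0
  end.

Definition asub := {I : {set 'I_(b + a)} | #|I| == a}.

Definition Tmx : 'M[K]_#|{: asub}| :=
  \matrix_(i, j) Tentry (val (enum_val i)) (val (enum_val j)).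

Definition I0set : {set 'I_(b + a)} := [set rshift b i | i : 'I_a].

Lemma I0set_card : #|I0set| == a.
Proof.
by rewrite /I0set card_imset ?cardsT ?card_ord //; apply: rshift_inj.
Qed.

Definition I0 : asub := exist _ I0set I0set_card.

End Defs.

From HB Require Import structures.
From mathcomp Require Import all_boot all_order all_algebra.
From mathcomp Require Import zify.
From Stdlib Require Import ClassicalEpsilon.
Set Implicit Arguments. Unset Strict Implicit. Unset Printing Implicit Defensive.
Import Order.TTheory GRing.Theory Num.Theory.
Local Open Scope ring_scope.

(* Write beta for the symbol of 1 - A, so that 1 - A_{k-1} = (beta_{j-i})_{i,j<k}.
   For a column sequence c : nat -> int we consider the Toeplitz minor formed by
   the first n rows and the columns c 0, ..., c (n-1), "cut" to 0 unless
   c j = j for n <= j < a (cut_minor n c).  For the identity sequence this is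
   F_n.  Expanding along the first row gives a recursion (cut_minor_rec) in
   which the columns c 0 < ... < c a are deleted one at a time, c m carrying
   the sign (-1)^m, and the remaining ones shifted down by one.

   An a-subset I of [-b, a-1] has a column sequence c_I (its elements in
   increasing order, continued by c_I j = j), and I u {a} = (L + 1) u {s}
   holds exactly when s = c_I m and L + 1 is (I u {a}) \ {c_I m}; then
   epsilon_s(I) = (-1)^m.  Hence the row I of T realises one step of the
   recursion (transfer_step), by induction the column I0 of T^n lists the
   cut minors of the c_L (Tpow_col_I0), and the entry (I0, I0) is F_n. *)

Lemma incr_add (c : nat -> int) : (forall j, c j < c j.+1) ->
  forall j d, c j + d%:Z <= c (j + d)%N.
Proof.
move=> c_incr j d; elim: d => [|d IH]; first by rewrite addn0 addr0.
by have := c_incr (j + d)%N; rewrite addnS; lia.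
Qed.

Section ToeplitzMinors.
Variable K : fieldType.
Variable S : seq int.
Variable w : int -> K.
Variables a b : nat.

Notation beta := (beta S w).

(* When S lies in [-b, a], beta vanishes outside [-b, a]; these two facts
   confine the recursion below to finitely many columns. *)
Lemma beta_above (x : int) :
  (forall s, s \in S -> s <= a%:Z) -> a%:Z < x -> beta x = 0.
Proof.
move=> hup hx; rewrite /beta /omega.
have -> : (x == 0) = false by apply/negbTE; rewrite gt_eqF //; lia.
by case: ifP => [/hup|]; [lia | rewrite subr0].
Qed.

Lemma beta_below (x : int) :
  (forall s, s \in S -> - b%:Z <= s) -> x < - b%:Z -> beta x = 0.
Proof.
move=> hlo hx; rewrite /beta /omega.
have -> : (x == 0) = false by apply/negbTE; rewrite lt_eqF //; lia.
by case: ifP => [/hlo|]; [lia | rewrite subr0].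
Qed.

Definition toeplitz_minor (n : nat) (c : nat -> int) : K :=
  \det (\matrix_(r < n, j < n) beta (c j - (r : nat)%:Z)).

Definition tail_fixed (n : nat) (c : nat -> int) : bool :=
  [forall j : 'I_a, (n <= j)%N ==> (c j == (j : nat)%:Z)].

Definition cut_minor (n : nat) (c : nat -> int) : K :=
  if tail_fixed n c then toeplitz_minor n c else 0.

(* Delete the entry c m and shift the others down by one: removing the first
   row and the column c m of a Toeplitz minor leaves the minor on the rows
   1, 2, ... and these columns, i.e. the minor on drop_col c m. *)
Definition drop_col (c : nat -> int) (m : nat) : nat -> int :=
  fun l => c (bump m l) - 1.

Lemma toeplitz_minor_expand n c : toeplitz_minor n.+1 c =
  \sum_(j < n.+1) (-1) ^+ j * beta (c j) * toeplitz_minor n (drop_col c j).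
Proof.
rewrite /toeplitz_minor (expand_det_row _ ord0); apply: eq_bigr => j _.
rewrite mxE /cofactor /= add0n subr0 [_ * beta _]mulrC -mulrA.
congr (_ * (_ * _)); congr (\det _); apply/matrixP => r l; rewrite !mxE /drop_col /=.
congr (beta _); rewrite /bump /=; lia.
Qed.

Lemma eq_cut_minor n c c' : c =1 c' -> cut_minor n c = cut_minor n c'.
Proof.
move=> e; rewrite /cut_minor /tail_fixed /toeplitz_minor.
rewrite (eq_forallb (fun j : 'I_a => congr1 (fun x => (n <= j)%N ==> (x == _)) (e j))).
by congr (if _ then \det _ else _); apply/matrixP => i j; rewrite !mxE e.
Qed.

(* A first column left of -b is a zero column of the minor. *)
Lemma cut_minor_below n c :
  (forall s, s \in S -> - b%:Z <= s) -> (1 <= a)%N ->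
  c 0%N < - b%:Z -> cut_minor n c = 0.
Proof.
move=> hlo ha hc0; rewrite /cut_minor; case: ifP => // hfix.
case: n hfix => [|n] hfix.
  by move/forallP: hfix => /(_ (Ordinal ha)) /eqP /= e; move: hc0; rewrite e; lia.
rewrite /toeplitz_minor (expand_det_col _ ord0) big1 // => r _.
by rewrite mxE beta_below ?mul0r //=; lia.
Qed.

Lemma cut_minor_id n : cut_minor n (fun j => j%:Z) = Fk S w n.
Proof.
rewrite /cut_minor ifT; last by apply/forallP => j; apply/implyP.
case: n => [|n]; first by rewrite /toeplitz_minor det_mx00.
rewrite /Fk /toeplitz_minor; congr (\det _); apply/matrixP => i j; rewrite !mxE /beta.
by rewrite subr_eq0 eqz_nat eq_sym.
Qed.

Section CutMinorRecursion.
(* c is strictly increasing and the identity from a on, like the column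
   sequence of an a-subset of [-b, a-1]. *)
Variable c : nat -> int.
Hypothesis c_incr : forall j, c j < c j.+1.
Hypothesis c_tail : forall j, (a <= j)%N -> c j = j%:Z.

Lemma incr_le_id j : c j <= j%:Z.
Proof.
case: (leqP a j) => [/c_tail -> //|hj].
have := incr_add c_incr j (a - j); rewrite subnKC ?(ltnW hj) // (c_tail (leqnn a)).
lia.
Qed.

Lemma tail_fixedP n : tail_fixed n c -> forall i, (n <= i)%N -> c i = i%:Z.
Proof.
move=> hfix i hi; case: (ltnP i a) => hia; last exact: c_tail.
by move/forallP: hfix => /(_ (Ordinal hia)) /implyP /(_ hi) /eqP.
Qed.

Lemma drop_col_not_fixed n m :
  ~~ tail_fixed n.+1 c -> ~~ tail_fixed n (drop_col c m).
Proof.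
move/forallPn=> [j]; rewrite negb_imply => /andP[hj /eqP hcj].
have hj1 : (j.-1 < a)%N by have := ltn_ord j; lia.
apply/forallPn; exists (Ordinal hj1); rewrite negb_imply /=.
apply/andP; split; first by lia.
have h1 := incr_le_id j; have h2 := c_incr j.-1.
rewrite prednK in h2; last by lia.
rewrite /drop_col /bump; case: leqP => _; last by rewrite add0n; lia.
rewrite add1n prednK; last by lia.
lia.
Qed.

Lemma drop_col_fixed n j :
  tail_fixed n.+1 c -> (j <= n)%N -> tail_fixed n (drop_col c j).
Proof.
move=> hfix hj; apply/forallP => l; apply/implyP => hl.
rewrite /drop_col /bump (_ : (j <= l)%N) ?add1n; last by lia.
by rewrite (tail_fixedP hfix) //; apply/eqP; lia.
Qed.

Lemma drop_col_unfixed n j :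
  tail_fixed n.+1 c -> (n < j)%N -> (n < a)%N -> ~~ tail_fixed n (drop_col c j).
Proof.
move=> hfix hj hn; apply/forallPn; exists (Ordinal hn).
rewrite negb_imply /= leqnn /drop_col /bump (_ : (j <= n)%N = false); last by lia.
rewrite add0n; have := c_incr n; rewrite (tail_fixedP hfix (leqnn n.+1)); lia.
Qed.

(* The recursion for cut minors: only the columns c 0, ..., c a contribute to
   the first-row expansion, since beta (c j) = 0 beyond a and the tail
   condition fails beyond n. *)
Lemma cut_minor_rec n (hup : forall s, s \in S -> s <= a%:Z) :
  cut_minor n.+1 c =
  \sum_(m < a.+1) (-1) ^+ m * beta (c m) * cut_minor n (drop_col c m).
Proof.
rewrite /cut_minor; case: (boolP (tail_fixed n.+1 c)) => hfix; last first.
  by rewrite big1 // => m _; rewrite (negbTE (drop_col_not_fixed _ hfix)) mulr0.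
pose t (j : nat) := (-1) ^+ j * beta (c j).
rewrite toeplitz_minor_expand.
rewrite (big_ord_widen (maxn n a).+1 (fun j => t j * toeplitz_minor n (drop_col c j)));
  last by lia.
rewrite [RHS](big_ord_widen (maxn n a).+1
  (fun j => t j * if tail_fixed n (drop_col c j) then toeplitz_minor n (drop_col c j) else 0));
  last by lia.
rewrite big_mkcond [RHS]big_mkcond /=; apply: eq_bigr => -[j hj] _ /=.
have [hjn|hjn] := leqP j n.
  have [hja|hja] := leqP j a; first by rewrite drop_col_fixed // !ifT //; lia.
  (* a < j <= n: beta (c j) = beta j = 0 *)
  rewrite !ltnS hjn (leqNgt j a) hja /=.
  by rewrite /t c_tail ?beta_above ?mulr0 ?mul0r //; lia.
have [hja|hja] := leqP j a; last by rewrite !ifF //; lia.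
(* n < j <= a: the tail condition fails after deleting column j *)
rewrite !ltnS hja (leqNgt j n) hjn /= (negbTE (drop_col_unfixed hfix hjn _)) ?mulr0 //; lia.
Qed.

End CutMinorRecursion.
End ToeplitzMinors.

Lemma card_count (T : finType) (A : {set T}) (P : pred T) :
  #|[set x in A | P x]| = count P (enum A).
Proof.
rewrite cardE /enum_mem -size_filter -filter_predI; congr size.
by apply: eq_filter => x; rewrite /= !inE andbC.
Qed.

Lemma mem_mkseqE (T : eqType) (f : nat -> T) n y :
  (y \in mkseq f n) = [exists j : 'I_n, f j == y].
Proof.
apply/mapP/existsP => [[j]|[j /eqP <-]].
  by rewrite mem_iota add0n => hj ->; exists (Ordinal hj).
by exists (j : nat); rewrite // mem_iota add0n ltn_ord.
Qed.

Lemma ltn_bump2 h i j : (bump h i < bump h j)%N = (i < j)%N.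
Proof. by rewrite !ltnNge leq_bump2. Qed.

Lemma bump_leS h i : (bump h i <= i.+1)%N.
Proof. by rewrite /bump -add1n leq_add2r leq_b1. Qed.

Section SubsetEncoding.
Variables a b : nat.
Implicit Types (I L : {set 'I_(b + a)}) (x : int).

Lemma toZ_inj : injective (@toZ a b).
Proof. by move=> i j; rewrite /toZ => h; apply: ord_inj; lia. Qed.

Lemma toZ_range (i : 'I_(b + a)) : - b%:Z <= toZ i < a%:Z.
Proof. by rewrite /toZ; have := ltn_ord i; lia. Qed.

Lemma toZ_surj x : - b%:Z <= x < a%:Z -> exists i : 'I_(b + a), toZ i = x.
Proof.
move=> /andP[h1 h2]; have hx : (absz (x + b%:Z)%R < b + a)%N by lia.
by exists (Ordinal hx); rewrite /toZ /=; lia.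
Qed.

Definition elemsZ I : seq int := [seq toZ i | i <- enum I].

Lemma elemsZ_sorted I : sorted <%R (elemsZ I).
Proof.
have inc_A : sorted ltn (map val (enum I)).
  rewrite -[enum _](eq_filter (mem_enum _)).
  rewrite -(eq_filter (mem_map val_inj _)) -filter_map.
  by rewrite (sorted_filter ltn_trans) // unlock val_ord_enum iota_ltn_sorted.
have -> : elemsZ I = map (fun n : nat => n%:Z - b%:Z) (map val (enum I)).
  by rewrite -map_comp.
by rewrite sorted_map; apply: sub_sorted inc_A => x y /=; lia.
Qed.

Lemma mem_elemsZ I x : (x \in elemsZ I) = inZ I x.
Proof.
apply/mapP/existsP => [[i hi ->]|[i /andP[hi /eqP <-]]]; exists i => //.
  by rewrite -mem_enum hi eqxx.
by rewrite mem_enum.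
Qed.

Lemma size_elemsZ I : size (elemsZ I) = #|I|.
Proof. by rewrite size_map cardE. Qed.

Lemma elemsZ_range I x : x \in elemsZ I -> - b%:Z <= x < a%:Z.
Proof. by move/mapP=> [i _ ->]; apply: toZ_range. Qed.

Lemma elemsZ_inj I L : elemsZ I = elemsZ L -> I = L.
Proof.
move=> e; apply/setP => i.
by rewrite -mem_enum -(mem_map toZ_inj) -/(elemsZ I) e (mem_map toZ_inj) mem_enum.
Qed.

(* The column sequence of I: its elements c 0 < ... < c (#|I|-1), continued
   by c j = j beyond; for the a-subset I0 = [0, a-1] it is the identity. *)
Definition cols I (j : nat) : int := nth j%:Z (elemsZ I) j.

Section ColumnsOfASubset.
Variable I : {set 'I_(b + a)}.
Hypothesis cardI : #|I| = a.

Lemma size_elemsZ_a : size (elemsZ I) = a.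
Proof. by rewrite size_elemsZ cardI. Qed.

Lemma cols_tail j : (a <= j)%N -> cols I j = j%:Z.
Proof. by move=> h; rewrite /cols nth_default // size_elemsZ_a. Qed.

Lemma cols_mem j : (j < a)%N -> cols I j \in elemsZ I.
Proof. by move=> h; rewrite /cols mem_nth // size_elemsZ_a. Qed.

Lemma cols_incr j : cols I j < cols I j.+1.
Proof.
case: (ltnP j.+1 a) => h.
  have h1 : (j < size (elemsZ I))%N by rewrite size_elemsZ_a; lia.
  have h2 : (j.+1 < size (elemsZ I))%N by rewrite size_elemsZ_a.
  rewrite /cols (set_nth_default 0 _ h1) (set_nth_default 0 _ h2).
  by apply: (sorted_ltn_nth lt_trans) => //; apply: elemsZ_sorted.
case: (ltnP j a) => h2; last by rewrite !cols_tail //; lia.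
by have := elemsZ_range (cols_mem h2); rewrite (@cols_tail j.+1 h); lia.
Qed.

Lemma cols_lt i k : (i < k)%N -> cols I i < cols I k.
Proof.
move=> h; have := incr_add cols_incr i.+1 (k - i.+1); rewrite subnKC //.
by have := cols_incr i; lia.
Qed.

Lemma cols_inj : injective (cols I).
Proof.
by move=> i k e; case: (ltngtP i k) => // h; have := cols_lt h; rewrite e ltxx.
Qed.

Lemma cols_lo j : - b%:Z <= cols I j.
Proof.
case: (ltnP j a) => h; first by have /andP[] := elemsZ_range (cols_mem h).
by rewrite cols_tail //; lia.
Qed.

Lemma elemsZ_cols : elemsZ I = mkseq (cols I) a.
Proof.
apply: (@eq_from_nth _ 0); first by rewrite size_mkseq size_elemsZ_a.
move=> j; rewrite size_elemsZ_a => hj.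
by rewrite nth_mkseq // /cols (set_nth_default 0) // size_elemsZ_a.
Qed.

Lemma mem_elemsZ_cols x : (x \in elemsZ I) = [exists j : 'I_a, cols I j == x].
Proof. by rewrite elemsZ_cols mem_mkseqE. Qed.

Lemma mem_elemsZ_a_cols x :
  (x \in elemsZ I) || (x == a%:Z) = [exists j : 'I_a.+1, cols I j == x].
Proof.
rewrite mem_elemsZ_cols; apply/idP/existsP => [/orP[/existsP[j hj]|/eqP ->]|[j /eqP <-]].
- by exists (widen_ord (leqnSn a) j).
- by exists ord_max; rewrite cols_tail.
- case: (ltnP j a) => h; first by apply/orP; left; apply/existsP; exists (Ordinal h).
  by rewrite cols_tail // (_ : (j : nat) = a) ?eqxx ?orbT //; have := ltn_ord j; lia.
Qed.

End ColumnsOfASubset.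

Lemma eq_cols_set I L : #|I| = a -> #|L| = a ->
  (forall l, (l < a)%N -> cols I l = cols L l) -> I = L.
Proof.
move=> hI hL e; apply: elemsZ_inj; rewrite (elemsZ_cols hI) (elemsZ_cols hL).
by apply/eq_in_map => l; rewrite mem_iota add0n; apply: e.
Qed.

End SubsetEncoding.

Section ShiftStructure.
Variables a b : nat.
Variable I : {set 'I_(b + a)}.
Hypothesis cardI : #|I| = a.
Variable m : nat.

Definition shifted_cols : seq int := mkseq (fun l => cols I (bump m l) - 1) a.

Lemma shifted_cols_sorted : sorted <%R shifted_cols.
Proof.
rewrite /shifted_cols /mkseq sorted_map.
apply: (sub_sorted _ (iota_ltn_sorted 0 a)) => i k /= hik.
by rewrite ltrD2r cols_lt // ltn_bump2.
Qed.

Variable L : {set 'I_(b + a)}.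
Hypothesis cardL : #|L| = a.
Hypothesis m_le_a : (m <= a)%N.

Lemma Tcond_of_cols : (forall l, (l < a)%N -> cols L l = cols I (bump m l) - 1) ->
  Tcond I L (cols I m).
Proof.
move=> hL x; rewrite -!mem_elemsZ (mem_elemsZ_a_cols cardI) (mem_elemsZ_cols cardL).
apply/idP/idP => [/existsP[j /eqP <-]|].
  case: (eqVneq (j : nat) m) => [->|njm]; first by rewrite eqxx orbT.
  have hu : (unbump m j < a)%N by have := ltn_ord j; rewrite /unbump; lia.
  apply/orP; left; apply/existsP; exists (Ordinal hu).
  by rewrite /= hL // unbumpK ?inE // addrK.
case/orP => [/existsP[l /eqP hl]|/eqP ->]; apply/existsP.
  have hb : (bump m l < a.+1)%N by have := bump_leS m l; have := ltn_ord l; lia.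
  by exists (Ordinal hb); apply/eqP => /=; have := hL l (ltn_ord l); lia.
by exists (Ordinal (m_le_a : (m < a.+1)%N)).
Qed.

(* In I u {a} = (L + 1) u {c m} the point c m is not in L + 1: counting,
   the a+1 distinct columns of I u {a} must all be needed. *)
Lemma Tcond_gap : Tcond I L (cols I m) -> cols I m - 1 \notin elemsZ L.
Proof.
move=> hT.
pose U := mkseq (cols I) a.+1.
have memP y : (y \in map (fun z => z + 1) (elemsZ L)) = (y - 1 \in elemsZ L).
  apply/mapP/idP => [[z hz ->]|hy]; first by rewrite addrK.
  by exists (y - 1) => //; rewrite subrK.
have hUP : U =i map (fun z => z + 1) (elemsZ L) ++ [:: cols I m].
  move=> y; rewrite mem_cat mem_seq1 memP mem_mkseqE -(mem_elemsZ_a_cols cardI).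
  by have := hT y; rewrite -!mem_elemsZ.
have := uniq_size_uniq (mkseq_uniq _ (cols_inj cardI)) hUP.
rewrite size_cat size_map size_elemsZ cardL size_mkseq addn1 eqxx.
by rewrite cat_uniq /= orbF andbT => /andP[_]; rewrite memP.
Qed.

Lemma cols_of_Tcond : Tcond I L (cols I m) ->
  forall l, (l < a)%N -> cols L l = cols I (bump m l) - 1.
Proof.
move=> hT; have gap := Tcond_gap hT.
suff hsL : elemsZ L = shifted_cols.
  by move=> l hl; rewrite /cols hsL /shifted_cols nth_mkseq.
apply: (irr_sorted_eq lt_trans ltxx (elemsZ_sorted L) shifted_cols_sorted) => x.
have := hT (x + 1); rewrite -!mem_elemsZ addrK => hx.
rewrite /shifted_cols mem_mkseqE; apply/idP/existsP => [hxL|[l /eqP hl]].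
  move: hx; rewrite hxL /= (mem_elemsZ_a_cols cardI) => /existsP[j /eqP hj].
  have njm : (j : nat) != m by apply: contraNneq gap => <-; rewrite hj addrK.
  have hu : (unbump m j < a)%N by have := ltn_ord j; move/eqP: njm; rewrite /unbump; lia.
  by exists (Ordinal hu); rewrite /= unbumpK ?inE // hj addrK.
have hb : (bump m l < a.+1)%N by have := bump_leS m l; have := ltn_ord l; lia.
have : (x + 1 \in elemsZ I) || (x + 1 == a%:Z).
  by rewrite (mem_elemsZ_a_cols cardI); apply/existsP; exists (Ordinal hb); apply/eqP => /=; lia.
rewrite hx => /orP[//|/eqP e].
have : bump m l = m by apply: (cols_inj cardI); lia.
by move/eqP; rewrite eq_sym (negbTE (neq_bump _ _)).
Qed.

End ShiftStructure.

Section ColumnDeletion.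
Variables a b : nat.
Implicit Types I L : {set 'I_(b + a)}.

Lemma Tcond_col I L s : #|I| = a -> Tcond I L s -> exists m : 'I_a.+1, s = cols I m.
Proof.
move=> hI hT; have := hT s; rewrite eqxx orbT -mem_elemsZ (mem_elemsZ_a_cols hI).
by move/existsP=> [m /eqP <-]; exists m.
Qed.

Lemma Tcond_uniq I L m1 m2 : #|I| = a -> #|L| = a -> (m1 <= a)%N -> (m2 <= a)%N ->
  Tcond I L (cols I m1) -> Tcond I L (cols I m2) -> m1 = m2.
Proof.
move=> hI hL h1 h2 t1 t2.
have e l : (l < a)%N -> bump m1 l = bump m2 l.
  move=> hl; apply: (cols_inj hI).
  by have := cols_of_Tcond hI hL h1 t1 hl; have := cols_of_Tcond hI hL h2 t2 hl; lia.
case: (ltngtP m1 m2) => // h.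
  by have := e m1 (leq_trans h h2); rewrite /bump leqnn; case: (leqP m2 m1); lia.
by have := e m2 (leq_trans h h1); rewrite /bump leqnn; case: (leqP m1 m2); lia.
Qed.

(* The sign epsilon_{c m}(I) is (-1)^m, since c 0 < ... < c (m-1) are the
   elements of I below c m. *)
Lemma epsI_cols (K : fieldType) I m : #|I| = a -> (m <= a)%N ->
  epsI K (cols I m) I = (-1) ^+ m.
Proof.
move=> hI hm; rewrite /epsI card_count.
rewrite (_ : count _ _ = count (fun x => x < cols I m) (elemsZ I)); last by rewrite count_map.
rewrite (elemsZ_cols hI) /mkseq count_map.
have -> : iota 0 a = iota 0 m ++ iota m (a - m) by rewrite -iotaD subnKC.
rewrite count_cat.
rewrite (eq_in_count (a2 := predT) (s := iota 0 m)); last first.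
  by move=> j; rewrite mem_iota add0n => hj /=; apply: (cols_lt hI hj).
rewrite (eq_in_count (a2 := pred0) (s := iota m _)); last first.
  move=> j; rewrite mem_iota => /andP[hj _] /=.
  case: (eqVneq m j) => [<-|hne]; first by rewrite ltxx.
  have hmj : (m < j)%N by lia.
  by apply/negbTE; rewrite -leNgt ltW // cols_lt.
by rewrite count_predT count_pred0 size_iota addn0.
Qed.

End ColumnDeletion.

Section TransferMatrix.
Variable K : fieldType.
Variable S : seq int.
Variable w : int -> K.
Variables a b : nat.
Hypothesis S_le_a : forall s, s \in S -> s <= a%:Z.
Hypothesis S_ge_b : forall s, s \in S -> - b%:Z <= s.

Notation beta := (beta S w).
Implicit Types I L : {set 'I_(b + a)}.

Lemma card_asub (I : asub a b) : #|val I| = a.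
Proof. exact: eqP (valP I). Qed.

Definition is_shift I L (m : nat) : bool :=
  [forall l : 'I_a, cols L l == cols I (bump m l) - 1].

Lemma is_shiftP I L m : #|I| = a -> #|L| = a -> (m <= a)%N ->
  reflect (Tcond I L (cols I m)) (is_shift I L m).
Proof.
move=> hI hL hm; apply: (iffP forallP) => [h|hT l].
  by apply: Tcond_of_cols => // l hl; apply/eqP/(h (Ordinal hl)).
exact/eqP/(cols_of_Tcond hI hL hm hT).
Qed.

Lemma is_shift_uniq I L m1 m2 : #|I| = a -> #|L| = a -> (m1 <= a)%N -> (m2 <= a)%N ->
  is_shift I L m1 -> is_shift I L m2 -> m1 = m2.
Proof.
move=> hI hL h1 h2 /(is_shiftP hI hL h1) t1 /(is_shiftP hI hL h2).
exact: Tcond_uniq t1.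
Qed.

Lemma Tentry_shift I L (m : nat) : #|I| = a -> #|L| = a -> (m <= a)%N ->
  is_shift I L m -> Tentry S w I L = (-1) ^+ m * beta (cols I m).
Proof.
move=> hI hL hm /(is_shiftP hI hL hm) hT; rewrite /Tentry.
case: excluded_middle_informative => [H|[]]; last by exists (cols I m).
case: (constructive_indefinite_description _ H) => s' hs' /=.
have [m' e] := Tcond_col hI hs'; rewrite e in hs' *.
have hm' : (m' <= a)%N by have := ltn_ord m'; lia.
by rewrite (Tcond_uniq hI hL hm' hm hs' hT) epsI_cols.
Qed.

Lemma Tentry_no_shift I L : #|I| = a -> #|L| = a ->
  (forall m : 'I_a.+1, ~~ is_shift I L m) -> Tentry S w I L = 0.
Proof.
move=> hI hL hn; rewrite /Tentry.
case: excluded_middle_informative => // -[s hs]; exfalso.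
have [m e] := Tcond_col hI hs; rewrite e in hs.
have hm : (m <= a)%N by have := ltn_ord m; lia.
by have := hn m; rewrite (introT (is_shiftP hI hL hm) hs).
Qed.

Lemma shifted_cols_range I m x : #|I| = a -> (m <= a)%N ->
  (m == 0)%N || (- b%:Z < cols I 0) -> x \in shifted_cols I m -> - b%:Z <= x < a%:Z.
Proof.
move=> hI hm hv; rewrite /shifted_cols mem_mkseqE => /existsP[l /eqP <-].
have hb : (bump m l <= a)%N by have := bump_leS m l; have := ltn_ord l; lia.
have up : cols I (bump m l) <= a%:Z.
  rewrite -(cols_tail hI (leqnn a)); case: (ltngtP (bump m l) a) => h; last by rewrite h.
  - exact/ltW/(cols_lt hI).
  - lia.
have lo : - b%:Z < cols I (bump m l).
  case: (posnP (bump m l)) => h; last by have := cols_lt hI h; have := cols_lo hI 0; lia.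
  have hm0 : (m == 0)%N = false by move: h; rewrite /bump; case: (leqP m l) => /=; lia.
  by rewrite h; move: hv; rewrite hm0.
lia.
Qed.

Lemma shift_target I m : #|I| = a -> (m <= a)%N ->
  (m == 0)%N || (- b%:Z < cols I 0) -> exists L : asub a b, is_shift I (val L) m.
Proof.
move=> hI hm hv.
pose Ls := [set i : 'I_(b + a) | toZ i \in shifted_cols I m].
have hsq : elemsZ Ls = shifted_cols I m.
  apply: (irr_sorted_eq lt_trans ltxx (elemsZ_sorted Ls) (shifted_cols_sorted hI m)) => x.
  rewrite mem_elemsZ; apply/existsP/idP => [[i /andP[]]|hx].
    by rewrite inE => hi /eqP <-.
  have [i hi] := toZ_surj (shifted_cols_range hI hm hv hx).
  by exists i; rewrite inE hi hx eqxx.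
have hc : #|Ls| == a by rewrite -size_elemsZ hsq size_mkseq.
exists (exist _ Ls hc); apply/forallP => l /=.
by rewrite /cols hsq /shifted_cols nth_mkseq.
Qed.

Notation term I n m :=
  ((-1) ^+ m * beta (cols I m) * cut_minor S w a n (drop_col (cols I) m)).

Lemma Tentry_cut_minor (I L : asub a b) n :
  Tentry S w (val I) (val L) * cut_minor S w a n (cols (val L)) =
  \sum_(m < a.+1) (if is_shift (val I) (val L) m then term (val I) n m else 0).
Proof.
have hI := card_asub I; have hL := card_asub L.
have [/existsP[m0 hm0]|hn] := boolP [exists m : 'I_a.+1, is_shift (val I) (val L) m];
  last first.
  rewrite (Tentry_no_shift hI hL) ?mul0r; last by move=> m; apply: contra hn => h; apply/existsP; exists m.
  by rewrite big1 // => m _; case: ifP => // hm; case/existsP: hn; exists m.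
have hm0a : (m0 <= a)%N by have := ltn_ord m0; lia.
rewrite (bigD1 m0) //= hm0 big1 ?addr0; last first.
  move=> m hne; case: ifP => // hm; case/eqP: hne; apply: val_inj.
  by apply: (is_shift_uniq hI hL _ hm0a hm hm0); have := ltn_ord m; lia.
rewrite (Tentry_shift hI hL hm0a hm0); congr (_ * _); apply: eq_cut_minor => l.
case: (ltnP l a) => hl; first by move/forallP: hm0 => /(_ (Ordinal hl)) /eqP.
rewrite /drop_col (cols_tail hL hl) /bump (_ : (m0 <= l)%N) /= ?add1n; last by lia.
by rewrite (cols_tail hI); lia.
Qed.

(* Summing over L picks out the unique target of each deletion m; when there
   is none, c 0 = -b lies left of the deleted columns and the term is 0. *)
Lemma sum_shift_targets (a_gt0 : (1 <= a)%N) (I : asub a b) n (m : 'I_a.+1) :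
  \sum_(L : asub a b) (if is_shift (val I) (val L) m then term (val I) n m else 0) =
  term (val I) n m.
Proof.
have hI := card_asub I.
have hma : (m <= a)%N by have := ltn_ord m; lia.
have [hv|] := boolP ((m == 0 :> nat)%N || (- b%:Z < cols (val I) 0)).
  have [Lm hLm] := shift_target hI hma hv.
  rewrite -big_mkcond (big_pred1 Lm) // => L /=.
  apply/idP/eqP => [hL|->//]; apply: val_inj.
  apply: (eq_cols_set (card_asub L) (card_asub Lm)) => l hl.
  by move/forallP: hL => /(_ (Ordinal hl)) /eqP ->; move/forallP: hLm => /(_ (Ordinal hl)) /eqP ->.
rewrite negb_or => /andP[hm0 hb].
rewrite (cut_minor_below w n S_ge_b a_gt0) ?mulr0; first by rewrite big1 // => L _; case: ifP.
rewrite /drop_col /bump (_ : (m <= 0)%N = false) /=; last by lia.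
by rewrite add0n -[sval I]/(val I); have := cols_lo hI 0; lia.
Qed.

Lemma transfer_step (a_gt0 : (1 <= a)%N) (I : asub a b) n :
  \sum_(L : asub a b) Tentry S w (val I) (val L) * cut_minor S w a n (cols (val L)) =
  cut_minor S w a n.+1 (cols (val I)).
Proof.
have hI := card_asub I.
rewrite (cut_minor_rec w (cols_incr hI) (cols_tail hI) n S_le_a).
under eq_bigr do rewrite Tentry_cut_minor.
by rewrite exchange_big; apply: eq_bigr => m _; rewrite sum_shift_targets.
Qed.

Lemma cols_I0 j : cols (I0set a b) j = j%:Z.
Proof.
have hsq : elemsZ (I0set a b) = mkseq (fun j => j%:Z) a.
  apply: (irr_sorted_eq lt_trans ltxx (elemsZ_sorted _)).
    rewrite /mkseq sorted_map.
    by apply: (sub_sorted _ (iota_ltn_sorted 0 a)) => i k /=; rewrite ltz_nat.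
  move=> x; rewrite mem_elemsZ mem_mkseqE /inZ /I0set.
  apply/existsP/existsP => [[i /andP[/imsetP[k _ ->] /eqP <-]]|[k /eqP <-]].
    by exists k; rewrite /toZ /=; apply/eqP; lia.
  exists (rshift b k); rewrite (imset_f (fun i => rshift b i)) //=.
  by rewrite /toZ /=; apply/eqP; lia.
rewrite /cols hsq; case: (ltnP j a) => h; first by rewrite nth_mkseq.
by rewrite nth_default // size_mkseq.
Qed.

(* The column I0 of T^n lists the cut minors of the column sequences c_L;
   at n = 0 only c_I0, the identity, satisfies the tail condition. *)
Lemma Tpow_col_I0 (a_gt0 : (1 <= a)%N) n (L : asub a b) :
  (Tmx S w a b ^+ n) (enum_rank L) (enum_rank (I0 a b)) =
  cut_minor S w a n (cols (val L)).
Proof.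
elim: n L => [|n IH] L.
  rewrite expr0 mxE /cut_minor (inj_eq enum_rank_inj).
  have [->|hne] := eqVneq L (I0 a b).
    rewrite ifT /toeplitz_minor ?det_mx00 //.
    by apply/forallP => j; apply/implyP => _; rewrite cols_I0.
  rewrite ifF //; apply/negbTE; apply: contra hne => /forallP hc; apply/eqP.
  apply: val_inj; apply: (eq_cols_set (card_asub L) (card_asub (I0 a b))) => l hl /=.
  by rewrite cols_I0; move: (hc (Ordinal hl)) => /= /eqP.
rewrite exprS -mulmxE mxE -(transfer_step a_gt0).
rewrite (reindex (@enum_rank _)) /=; last by apply: onW_bij; apply: enum_rank_bij.
by apply: eq_bigr => L' _; rewrite IH mxE !enum_rankK.
Qed.

End TransferMatrix.

Theorem mainTheorem4 (K : fieldType) (S : seq int) (w : int -> K) (a b : nat) :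
  [pchar K] =i pred0 ->
  (a%:Z \in S) -> (forall s, s \in S -> s <= a%:Z) ->
  ((- b%:Z) \in S) -> (forall s, s \in S -> - b%:Z <= s) ->
  (1 <= a)%N -> (1 <= b)%N ->
  forall k : nat,
    Fk S w k = (Tmx S w a b ^+ k) (enum_rank (I0 a b)) (enum_rank (I0 a b)).
Proof.
move=> _ _ S_le_a _ S_ge_b a_gt0 _ k.
rewrite Tpow_col_I0 // -(cut_minor_id S w a).
by apply: eq_cut_minor => j /=; rewrite cols_I0.
Qed.
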